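(* Let $\mathcal T$ be an orbital category. The monotone map $\mathfrak R:\mathrm{wIndSys}^{uni}_{\mathcal T}\to\mathrm{Transf}_{\mathcal T}$ has a fully faithful right adjoint, given by the composite of the inverse of the bijection $\mathfrak R|:\mathrm{IndSys}_{\mathcal T}\xrightarrow{\sim}\mathrm{Transf}_{\mathcal T}$ with the inclusion $\mathrm{IndSys}_{\mathcal T}\hookrightarrow\mathrm{wIndSys}^{uni}_{\mathcal T}$, and a fully faithful left adjoint given by $R\mapsto\overline{\underline{\mathbb F}}_R$.
   Context: For a small category $\mathcal T$, $\mathbb F_{\mathcal T}$ is the full subcategory of $\mathrm{Fun}(\mathcal T^{op},\mathrm{Set})$ on finite coproducts of representables; $\mathcal T$ is orbital if $\mathbb F_{\mathcal T}$ has pullbacks. $\mathbb F_V:=\mathbb F_{\mathcal T,/V}$, $*_V$ terminal, $\emptyset_V$ initial, $n\cdot S$ the $n$-fold coproduct; for $U\to V$, $\mathrm{Res}^V_U$ is pullback and $\mathrm{Ind}^V_U$ postcomposition. A full $\mathcal T$-subcategory assigns isomorphism-closed classes $\mathcal C_V\subseteq\mathrm{Ob}\,\mathbb F_V$ stable under restriction. For $S\in\mathbb F_V$ with orbits $U$ and $T_U\in\mathbb F_U$, $\coprod_U^ST_U:=\coprod_U\mathrm{Ind}_U^VT_U$. A $\mathcal T$-weak indexing system is a full $\mathcal T$-subcategory with $\mathcal C_V\neq\emptyset\Rightarrow *_V\in\mathcal C_V$ and closed under $\coprod^S_UT_U$ for $S\in\mathcal C_V$, $T_U\in\mathcal C_U$.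 It is unital if every $\mathcal C_V$ is nonempty and $S\sqcup S'\in\mathcal C_V\Rightarrow S,S'\in\mathcal C_V$; an indexing system if moreover each $\mathcal C_V$ is closed under finite coproducts. $\mathrm{wIndSys}^{uni}_{\mathcal T}\supseteq\mathrm{IndSys}_{\mathcal T}$ are the posets under inclusion; the poset of weak indexing systems has arbitrary meets (intersections), so for any collection $\mathcal D$ there is a smallest weak indexing system $\mathrm{Cl}_\infty(\mathcal D)$ containing it, and joins $\vee$ exist. A transfer system is a wide subcategory $R\subseteq\mathcal T$ containing all isomorphisms such that for every commutative square $V'\to V$, $\alpha':V'\to U'$, $\alpha:V\to U$, $U'\to U$ in $\mathcal T$ with $\alpha\in R$ and the induced map $V'\to V\times_UU'$ in $\mathbb F_{\mathcal T}$ a summand inclusion, $\alpha'\in R$; $\mathrm{Transf}_{\mathcal T}$ is their poset. $\mathfrak R(\mathcal C)$ is the set of maps $U\to V$ in $\mathcal T$ such that $U$, viewed as a $V$-set, lies in $\mathcal C_V$; it is a transfer system for unital $\mathcal C$, and it is a known fact that $\mathfrak R$ restricts to a bijection $\mathrm{IndSys}_{\mathcal T}\to\mathrm{Transf}_{\mathcal T}$. $\underline{\mathbb F}^0_{\mathcal T}$ has $V$-values $\{\emptyset_V,*_V\}$, and $\overline{\underline{\mathbb F}}_R:=\underline{\mathbb F}^0_{\mathcal T}\vee\mathrm{Cl}_\infty\big(\{\mathrm{Res}^W_VU\mid (U\to W)\in R,\ (V\to W)\in\mathcal T\}\big)$, where $U$ is regarded as a $W$-set. Adjoints of monotone maps: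 $L\dashv\pi$ iff $L(x)\le y\iff x\le\pi(y)$; fully faithful means order-reflecting. *)

From mathcomp Require Import all_boot.

Set Implicit Arguments.
Unset Strict Implicit.
Unset Printing Implicit Defensive.

Record smallCat := SmallCat {
  Ob : Type;
  Ar : Type;
  dom : Ar -> Ob;
  cod : Ar -> Ob;
  idc : Ob -> Ar;
  comp : Ar -> Ar -> Ar;
  dom_id : forall x, dom (idc x) = x;
  cod_id : forall x, cod (idc x) = x;
  dom_comp : forall f g, cod f = dom g -> dom (comp g f) = dom f;
  cod_comp : forall f g, cod f = dom g -> cod (comp g f) = cod g;
  comp_idl : forall f, comp (idc (cod f)) f = f;
  comp_idr : forall f, comp f (idc (dom f)) = f;
  comp_assoc : forall f g h, cod f = dom g -> cod g = dom h ->
     comp h (comp g f) = comp (comp h g) f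
}.

Section FT.
Variable T : smallCat.

(* F_T : finite coproducts of representables, presented as the free    *)
(* finite-coproduct completion of T: an object is a finite family of    *)
(* objects of T; a morphism (fmap, farr) sends summand i to summand      *)
(* fmap i via the arrow farr i.                                         *)
Record fobj := FObj { fidx : finType; fo : fidx -> Ob T }.

Record fmor (X Y : fobj) := FMor { fmap : fidx X -> fidx Y; farr : fidx X -> Ar T }.

Definition fvalid (X Y : fobj) (f : fmor X Y) : Prop :=
  forall i, dom (farr f i) = fo i /\ cod (farr f i) = fo (fmap f i).

Definition fcomp (X Y Z : fobj) (g : fmor Y Z) (f : fmor X Y) : fmor X Z :=
  FMor (fun i => fmap g (fmap f i)) (fun i => comp (farr g (fmap f i)) (farr f i)).

Definition fid (X : fobj) : fmor X X := FMor (fun i => i) (fun i => idc (fo i)).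

Definition feq (X Y : fobj) (f g : fmor X Y) : Prop :=
  forall i, fmap f i = fmap g i /\ farr f i = farr g i.

Definition fiso (X Y : fobj) (f : fmor X Y) : Prop :=
  fvalid f /\ exists g : fmor Y X,
    fvalid g /\ feq (fcomp g f) (fid X) /\ feq (fcomp f g) (fid Y).

Definition isPullback (X Y Z P : fobj) (f : fmor X Z) (g : fmor Y Z)
    (p1 : fmor P X) (p2 : fmor P Y) : Prop :=
  fvalid p1 /\ fvalid p2 /\ feq (fcomp f p1) (fcomp g p2) /\
  forall (W : fobj) (q1 : fmor W X) (q2 : fmor W Y),
    fvalid q1 -> fvalid q2 -> feq (fcomp f q1) (fcomp g q2) ->
    exists u : fmor W P, fvalid u /\ feq (fcomp p1 u) q1 /\ feq (fcomp p2 u) q2 /\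
      forall u' : fmor W P, fvalid u' -> feq (fcomp p1 u') q1 ->
        feq (fcomp p2 u') q2 -> feq u u'.

Definition fcoprod (X Y : fobj) : fobj :=
  @FObj (fidx X + fidx Y)%type
        (fun k => match k with inl i => fo i | inr j => fo j end).

Definition finl (X Y : fobj) : fmor X (fcoprod X Y) :=
  @FMor X (fcoprod X Y) (fun i => inl i) (fun i => idc (fo i)).

Definition summandIncl (X Y : fobj) (f : fmor X Y) : Prop :=
  exists (Z : fobj) (h : fmor (fcoprod X Z) Y), fiso h /\ feq (fcomp h (finl X Z)) f.

Definition orbital : Prop :=
  forall (X Y Z : fobj) (f : fmor X Z) (g : fmor Y Z), fvalid f -> fvalid g ->
    exists (P : fobj) (p1 : fmor P X) (p2 : fmor P Y), isPullback f g p1 p2.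

Definition rep (V : Ob T) : fobj := @FObj unit (fun _ => V).
Definition repArr (U V : Ob T) (a : Ar T) : fmor (rep U) (rep V) :=
  @FMor (rep U) (rep V) (fun _ => tt) (fun _ => a).

(* F_V = F_{T,/V}: objects of F_T with a structure map to y(V).         *)
Record vset (V : Ob T) := VSet {
  vS : fobj;
  varr : fidx vS -> Ar T;
  vdom : forall i, dom (varr i) = fo i;
  vcod : forall i, cod (varr i) = V
}.
Arguments varr {V} v i.
Arguments vdom {V} v i.
Arguments vcod {V} v i.

Definition vstr (V : Ob T) (S : vset V) : fmor (vS S) (rep V) :=
  @FMor (vS S) (rep V) (fun _ => tt) (varr S).

Definition vsiso (V : Ob T) (S S' : vset V) : Prop :=
  exists f : fmor (vS S) (vS S'), fiso f /\ feq (fcomp (vstr S') f) (vstr S).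

Definition vterm (V : Ob T) : vset V :=
  @VSet V (rep V) (fun _ => idc V) (fun _ => dom_id V) (fun _ => cod_id V).

Definition vempty (V : Ob T) : vset V :=
  @VSet V (@FObj void (fun v => match v with end)) (fun v => match v with end)
        (fun v => match v with end) (fun v => match v with end).

Definition vcoprod (V : Ob T) (S S' : vset V) : vset V.
Proof.
refine (@VSet V (fcoprod (vS S) (vS S'))
          (fun k => match k with inl i => varr S i | inr j => varr S' j end) _ _).
- by case=> i /=; apply: vdom.
- by case=> i /=; apply: vcod.
Defined.

Definition vbig (V : Ob T) (I : finType) (F : I -> vset V) : vset V.
Proof.
refine (@VSet V (@FObj {i : I & fidx (vS (F i))}
                       (fun p => fo (tagged p)))
          (fun p => varr (F (tag p)) (tagged p)) _ _).
- by case=> i j /=; apply: vdom.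
- by case=> i j /=; apply: vcod.
Defined.

Definition vInd (U V : Ob T) (a : Ar T) (ha : dom a = U) (hb : cod a = V)
    (X : vset U) : vset V.
Proof.
refine (@VSet V (vS X) (fun i => comp a (varr X i)) _ _).
- move=> i; rewrite dom_comp ?vdom //; by rewrite vcod ha.
- move=> i; rewrite cod_comp ?hb //; by rewrite vcod ha.
Defined.

(* coprod^S_U T_U := coprod_U Ind^V_U T_U, U ranging over the orbits of S *)
Definition vbigInd (V : Ob T) (S : vset V)
    (Tf : forall i : fidx (vS S), vset (fo i)) : vset V :=
  vbig (fun i => vInd (vdom S i) (vcod S i) (Tf i)).

Definition isRes (U V : Ob T) (a : Ar T) (S : vset V) (X : vset U) : Prop :=
  dom a = U /\ cod a = V /\
  exists p1 : fmor (vS X) (vS S), isPullback (vstr S) (repArr U V a) p1 (vstr X).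

(* an arrow a : U -> V viewed as the V-set U *)
Definition orbitV (a : Ar T) : vset (cod a) :=
  @VSet (cod a) (rep (dom a)) (fun _ => a) (fun _ => erefl) (fun _ => erefl).

Definition coll := forall V : Ob T, vset V -> Prop.

Definition subC (C D : coll) : Prop := forall V (S : vset V), C V S -> D V S.

Definition fullTsub (C : coll) : Prop :=
  (forall V (S S' : vset V), vsiso S S' -> C V S -> C V S') /\
  (forall U V (a : Ar T) (S : vset V) (X : vset U), C V S -> isRes a S X -> C U X).

Definition wIndSys (C : coll) : Prop :=
  fullTsub C /\
  (forall V, (exists S, C V S) -> C V (vterm V)) /\
  (forall V (S : vset V) (Tf : forall i : fidx (vS S), vset (fo i)),
     C V S -> (forall i, C (fo i) (Tf i)) -> C V (vbigInd Tf)).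

Definition uniWIndSys (C : coll) : Prop :=
  wIndSys C /\ (forall V, exists S, C V S) /\
  (forall V (S S' : vset V), C V (vcoprod S S') -> C V S /\ C V S').

Definition IndSys (C : coll) : Prop :=
  uniWIndSys C /\ (forall V, C V (vempty V)) /\
  (forall V (S S' : vset V), C V S -> C V S' -> C V (vcoprod S S')).

Definition Clinf (D : coll) : coll :=
  fun V S => forall C, wIndSys C -> subC D C -> C V S.

Definition wjoin (C D : coll) : coll := Clinf (fun V S => C V S \/ D V S).

Definition isoT (a : Ar T) : Prop :=
  exists b, dom b = cod a /\ cod b = dom a /\
    comp b a = idc (dom a) /\ comp a b = idc (cod a).

Definition subT (R R' : Ar T -> Prop) : Prop := forall a, R a -> R' a.

Definition transfer (R : Ar T -> Prop) : Prop :=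
  (forall a, isoT a -> R a) /\
  (forall f g, cod f = dom g -> R f -> R g -> R (comp g f)) /\
  (forall (V' U' V U : Ob T) (a' a v w : Ar T),
     dom a' = V' -> cod a' = U' -> dom a = V -> cod a = U ->
     dom v = V' -> cod v = V -> dom w = U' -> cod w = U ->
     comp a v = comp w a' -> R a ->
     forall (P : fobj) (p1 : fmor P (rep V)) (p2 : fmor P (rep U'))
            (u : fmor (rep V') P),
       isPullback (repArr V U a) (repArr U' U w) p1 p2 ->
       fvalid u -> feq (fcomp p1 u) (repArr V' V v) ->
       feq (fcomp p2 u) (repArr V' U' a') ->
       summandIncl u -> R a').

Definition frakR (C : coll) : Ar T -> Prop := fun a => C (cod a) (orbitV a).

Definition F0 : coll := fun V S => vsiso (vempty V) S \/ vsiso (vterm V) S.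

Definition genR (R : Ar T -> Prop) : coll :=
  fun V X => exists u v : Ar T, R u /\ isRes v (orbitV u) X.

Definition Fbar (R : Ar T -> Prop) : coll := wjoin F0 (Clinf (genR R)).

End FT.

(* An indexing system is determined by its transfer system: a V-set is a
   coproduct of its orbits, and a unital weak indexing system contains the orbits
   of its members because it is closed under summands.  Dually, Fbar_R is
   generated by the empty set, the point and the restrictions of the orbits in R,
   all of which lie in every unital weak indexing system whose transfer system
   contains R.  Fbar_R is order-reflecting because it lies inside the indexing
   system of V-sets all of whose orbits are in R; closure of the latter under
   restriction is the pullback axiom of R, applied to an orbit of the restriction
   sitting as a summand in the fibre over an orbit of the original V-set. *)

From Pilot Require Import Defs.
From mathcomp Require Import all_boot.

Set Implicit Arguments.
Unset Strict Implicit.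
Unset Printing Implicit Defensive.

Local Notation comp := Defs.comp.
#[local] Arguments varr {T V} v i.
#[local] Arguments vdom {T V} v i.
#[local] Arguments vcod {T V} v i.

Section Adjunctions.
Variable T : smallCat.
Implicit Types (U V : Ob T) (a : Ar T) (X : fobj T) (R : Ar T -> Prop) (C D : coll T).

Lemma comp_idlE (f : Ar T) x : cod f = x -> comp (idc x) f = f.
Proof. by move<-; apply: comp_idl. Qed.

Lemma comp_idrE (f : Ar T) x : dom f = x -> comp f (idc x) = f.
Proof. by move<-; apply: comp_idr. Qed.

Lemma comp_id_id (x : Ob T) : comp (idc x) (idc x) = idc x.
Proof. by apply: comp_idlE; rewrite cod_id. Qed.

Lemma isoT_idc V : isoT (idc V).
Proof. by exists (idc V); rewrite dom_id cod_id comp_id_id. Qed.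

Lemma fiso_farr_isoT X (Y : fobj T) (f : fmor X Y) i : fiso f -> isoT (farr f i).
Proof.
case=> vf [g [vg [gfK fgK]]]; have [/= gfi gfi_id] := gfK i.
have [_ /= fgfi_id] := fgK (fmap f i); rewrite gfi in fgfi_id.
by exists (farr g (fmap f i)); rewrite (vg _).1 (vg _).2 (vf i).1 (vf i).2 gfi.
Qed.

Lemma fiso_reindex X (Y : fobj T) (m : fidx X -> fidx Y) (m' : fidx Y -> fidx X) :
  cancel m m' -> cancel m' m -> (forall i, fo (m i) = fo i) ->
  fiso (FMor m (fun i => idc (fo i))).
Proof.
move=> mK m'K fo_m; have fo_m' j : fo (m' j) = fo j by rewrite -{2}(m'K j) fo_m.
split; first by move=> i /=; rewrite dom_id cod_id fo_m.
exists (FMor m' (fun j => idc (fo j))).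
split; first by move=> j /=; rewrite dom_id cod_id fo_m'.
by split=> i /=; rewrite ?mK ?m'K ?fo_m ?fo_m' comp_id_id.
Qed.

Lemma vsiso_reindex V (S S' : vset V) (m : fidx (vS S) -> fidx (vS S')) m' :
  cancel m m' -> cancel m' m -> (forall i, fo (m i) = fo i) ->
  (forall i, varr S' (m i) = varr S i) -> vsiso S S'.
Proof.
move=> mK m'K fo_m varr_m; exists (FMor m (fun i => idc (fo i))).
split; first exact: fiso_reindex mK m'K fo_m.
by move=> i /=; rewrite varr_m comp_idrE ?vdom.
Qed.

Lemma vsiso_refl V (S : vset V) : vsiso S S.
Proof. exact: (@vsiso_reindex _ _ _ id id). Qed.

Lemma vsiso_sym V (S S' : vset V) : vsiso S S' -> vsiso S' S.
Proof.
case=> f [[vf [g [vg [gfK fgK]]]] fS]; exists g; split; first by split=> //; exists f.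
move=> j /=; split=> //.
have [/= fgj fgj_id] := fgK j; have [_ /= Sfgj] := fS (fmap g j); rewrite fgj in Sfgj.
rewrite -Sfgj -comp_assoc; first by rewrite fgj_id comp_idrE ?vdom.
  by rewrite (vg j).2 (vf _).1.
by rewrite (vf _).2 fgj vdom.
Qed.

Lemma vsiso_varr V (S S' : vset V) j : vsiso S S' ->
  exists i b, [/\ isoT b, cod b = dom (varr S i) & varr S' j = comp (varr S i) b].
Proof.
case/vsiso_sym=> g [isog gS]; exists (fmap g j), (farr g j).
have [vg _] := isog; have [_ /= <-] := gS j.
by split; [exact: fiso_farr_isoT | rewrite (vg j).2 vdom |].
Qed.

Lemma vsiso_vcoprod0 V (S : vset V) : vsiso S (vcoprod S (vempty V)).
Proof.
pose m' (k : fidx (vS (vcoprod S (vempty V)))) : fidx (vS S) :=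
  match k with inl i => i | inr v => match v with end end.
by apply: (@vsiso_reindex V S (vcoprod S (vempty V)) inl m') => // [[]].
Qed.

Lemma vsiso_vcoprodC V (S S' : vset V) : vsiso (vcoprod S S') (vcoprod S' S).
Proof.
pose swap A B (k : (A + B)%type) : (B + A)%type :=
  match k with inl i => inr i | inr j => inl j end.
by apply: (@vsiso_reindex _ (vcoprod S S') (vcoprod S' S) (swap _ _) (swap _ _))
  => [[]|[]|[]|[]].
Qed.

Definition left_summand_family V (S S' : vset V) (k : fidx (vS (vcoprod S S'))) :
    vset (fo k) :=
  match k as k0 return vset (fo (f := vS (vcoprod S S')) k0) with
  | inl i => vterm (fo i)
  | inr j => vempty (fo j)
  end.
Arguments left_summand_family {V} S S' k.

Lemma vbigInd_left_summand V (S S' : vset V) :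
  vsiso (vbigInd (left_summand_family S S')) S.
Proof.
pose m (p : fidx (vS (vbigInd (left_summand_family S S')))) : fidx (vS S) :=
  match p with existT (inl i) _ => i | existT (inr _) v => match v with end end.
pose m' (i : fidx (vS S)) : fidx (vS (vbigInd (left_summand_family S S'))) :=
  existT _ (inl i) tt.
apply: (@vsiso_reindex _ _ _ m m') => [[[i []|j []]]|i|[[i []|j []]]|[[i []|j []]]] //=.
by rewrite comp_idrE ?vdom.
Qed.

Lemma wIndSys_summand C : wIndSys C -> (forall V, C V (vterm V)) ->
  (forall V, C V (vempty V)) ->
  forall V (S S' : vset V), C V (vcoprod S S') -> C V S /\ C V S'.
Proof.
move=> [[isoC _] [_ bigC]] termC emptyC.
have left V (S S' : vset V) : C V (vcoprod S S') -> C V S.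
  move=> SS'; apply: isoC (vbigInd_left_summand S S') _.
  by apply: bigC SS' _; case.
move=> V S S' SS'; split; first exact: left SS'.
exact: left (isoC _ _ _ (vsiso_vcoprodC S S') SS').
Qed.

Lemma uniWIndSys_vterm D V : uniWIndSys D -> D V (vterm V).
Proof. by move=> [[_ [termD _]] [nonemptyD _]]; apply: termD. Qed.

Lemma uniWIndSys_vempty D V : uniWIndSys D -> D V (vempty V).
Proof.
move=> uniD; have [[[isoD _] _] [_ summD]] := uniD.
by case/summD: (isoD _ _ _ (vsiso_vcoprod0 _) (uniWIndSys_vterm V uniD)).
Qed.

Lemma Clinf_wIndSys (G : coll T) : wIndSys (Clinf G).
Proof.
split; [split|split].
- by move=> V S S' SS' GS C wC GC; apply: wC.1.1 SS' (GS C wC GC).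
- by move=> U V a S X GS aX C wC GC; apply: wC.1.2 (GS C wC GC) aX.
- by move=> V [S GS] C wC GC; apply: wC.2.1; exists S; apply: GS.
- by move=> V S Tf GS GT C wC GC; apply: wC.2.2 => [|i]; [apply: GS | apply: GT].
Qed.

Lemma F0_subC C : fullTsub C -> (forall V, C V (vterm V)) ->
  (forall V, C V (vempty V)) -> subC (@F0 T) C.
Proof. by move=> [isoC _] termC emptyC V S [] /isoC; apply. Qed.

Lemma Fbar_min R C :
  wIndSys C -> subC (@F0 T) C -> subC (genR R) C -> subC (Fbar R) C.
Proof.
move=> wC F0C genC V S FS; apply: (FS C wC) => W X [/F0C //|GX].
exact: GX C wC genC.
Qed.

Lemma F0_Fbar R : subC (@F0 T) (Fbar R).
Proof. by move=> V S F0S C _ GC; apply: GC; left. Qed.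

Lemma genR_Fbar R : subC (genR R) (Fbar R).
Proof. by move=> V S RS C _ GC; apply: GC; right=> C' _ GC'; apply: GC'. Qed.

Lemma Fbar_uniWIndSys R : uniWIndSys (Fbar R).
Proof.
have wF : wIndSys (Fbar R) by apply: Clinf_wIndSys.
have termF V : Fbar R (vterm V) by apply: F0_Fbar; right; apply: vsiso_refl.
have emptyF V : Fbar R (vempty V) by apply: F0_Fbar; left; apply: vsiso_refl.
split=> //; split; first by move=> V; exists (vterm V).
exact: wIndSys_summand.
Qed.

Lemma isRes_idc V (S : vset V) : isRes (idc V) S S.
Proof.
split; first exact: dom_id; split; first exact: cod_id.
exists (fid (vS S)); split; first by move=> i /=; rewrite dom_id cod_id.
split; first by move=> i /=; rewrite vdom vcod.
split; first by move=> i /=; rewrite comp_idrE ?comp_idlE ?vdom ?vcod.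
move=> W q1 q2 vq1 vq2 q12; exists q1; split=> //.
split; first by move=> w /=; rewrite comp_idlE ?(vq1 w).2.
split.
  move=> w /=; split; first by case: (fmap q2 w).
  by have [_ /= ->] := q12 w; rewrite comp_idlE ?(vq2 w).2.
move=> u vu qu _ w; have [/= <- <-] := qu w.
by rewrite comp_idlE ?(vu w).2.
Qed.

Lemma orbit_Fbar R a : R a -> Fbar R (orbitV a).
Proof.
by move=> Ra; apply: genR_Fbar; exists a, (idc (cod a)); split=> //; apply: isRes_idc.
Qed.

Lemma Fbar_leftP R D : uniWIndSys D -> subC (Fbar R) D <-> subT R (frakR D).
Proof.
move=> uniD; split=> [FD a /orbit_Fbar /FD // | RD].
apply: Fbar_min uniD.1 _ _.
  by apply: F0_subC uniD.1.1 _ _ => V; [apply: uniWIndSys_vterm | apply: uniWIndSys_vempty].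
by move=> V X [u [v [Ru uX]]]; apply: uniD.1.1.2 (RD u Ru) uX.
Qed.

Section Fiber.
Variables (U V : Ob T) (a : Ar T) (S : vset V) (X : vset U) (p : fmor (vS X) (vS S)).
Hypothesis pbX : isPullback (vstr S) (repArr U V a) p (vstr X).
Variable s : fidx (vS S).

Definition fiber : fobj T := @FObj T {y : fidx (vS X) | fmap p y == s} (fun y => fo (val y)).
Definition fiber_proj : fmor fiber (rep (fo s)) :=
  @FMor T fiber (rep (fo s)) (fun _ => tt) (fun y => farr p (val y)).
Definition fiber_str : fmor fiber (rep U) :=
  @FMor T fiber (rep U) (fun _ => tt) (fun y => varr X (val y)).

Lemma fiber_pullback :
  isPullback (repArr (fo s) V (varr S s)) (repArr U V a) fiber_proj fiber_str.
Proof.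
have [vp [_ [pX univX]]] := pbX.
have fiber_s (y : fidx fiber) : fmap p (val y) = s := eqP (valP y).
split; first by move=> [y /= /eqP ys]; case: (vp y) => -> ->; rewrite ys.
split; first by move=> y /=; rewrite vdom vcod.
split; first by move=> [y /= /eqP ys]; have [_ /= <-] := pX y; rewrite ys.
move=> W q1 q2 vq1 vq2 q12.
pose q1S := @FMor T W (vS S) (fun _ => s) (farr q1).
have vq1S : fvalid q1S by move=> w; apply: vq1.
have q12S : feq (fcomp (vstr S) q1S) (fcomp (repArr U V a) q2).
  by move=> w; split; last apply: (q12 w).2.
have [u [vu [pu [Xu uniq]]]] := univX W q1S q2 vq1S vq2 q12S.
have u_s w : fmap p (fmap u w) == s by have [/= -> _] := pu w.
exists (@FMor T W fiber (fun w => exist _ (fmap u w) (u_s w)) (farr u)).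
split; first by move=> w; apply: vu.
split; first by move=> w; split; [case: (fmap q1 w) | apply: (pu w).2].
split; first by move=> w; split; [case: (fmap q2 w) | apply: (Xu w).2].
move=> u' vu' pu' Xu' w.
pose uX := @FMor T W (vS X) (fun w => val (fmap u' w)) (farr u').
have vuX : fvalid uX by move=> w'; have [d c] := vu' w'; split.
have puX : feq (fcomp p uX) q1S.
  by move=> w'; split; [apply: fiber_s | apply: (pu' w').2].
have XuX : feq (fcomp (vstr X) uX) q2.
  by move=> w'; split; [case: (fmap q2 w') | apply: (Xu' w').2].
have [/= uu' ->] := uniq uX vuX puX XuX w.
by split=> //; apply: val_inj.
Qed.

End Fiber.

Lemma summandIncl_point X (k : fidx X) :
  summandIncl (@FMor T (rep (fo k)) X (fun _ => k) (fun _ => idc (fo k))).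
Proof.
pose Z := @FObj T {j : fidx X | j != k} (fun j => fo (val j)).
pose m (c : fidx (fcoprod (rep (fo k)) Z)) : fidx X :=
  match c with inl _ => k | inr j => val j end.
pose m' (j : fidx X) : fidx (fcoprod (rep (fo k)) Z) :=
  if insub j is Some j' then inr j' else inl tt.
exists Z, (FMor m (fun c => idc (fo c))); split; last by move=> [] /=; rewrite comp_id_id.
apply: (fiso_reindex (m' := m')) => [[[]|j]|j|[[]|j]] //=; rewrite /m'.
- by rewrite insubF ?eqxx.
- by rewrite valK.
- by case: insubP => [j' _ <-|] //=; rewrite negbK => /eqP ->.
Qed.

(* The indexing system that corresponds to [R] under IndSys = Transf. *)
Definition admissible R : coll T := fun V S => forall i, R (varr S i).

Lemma admissible_vsiso R V (S S' : vset V) :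
  transfer R -> vsiso S S' -> admissible R S -> admissible R S'.
Proof.
move=> [isoR [compR _]] SS' RS j; have [i [b [isob cb ->]]] := vsiso_varr j SS'.
exact: compR cb (isoR b isob) (RS i).
Qed.

Lemma admissible_res R U V a (S : vset V) (X : vset U) :
  transfer R -> admissible R S -> isRes a S X -> admissible R X.
Proof.
move=> [_ [_ pbR]] RS [da [ca [p pbX]]] x; have [vp [_ [pX _]]] := pbX.
pose s := fmap p x; pose y : fidx (fiber p s) := exist (fun y => fmap p y == s) x (eqxx s).
apply: (pbR _ _ _ _ _ _ _ _ (vdom X x) (vcod X x) (vdom S s) (vcod S s)
          (vp x).1 (vp x).2 da ca (pX x).2 (RS s) _ _ _ _
          (fiber_pullback pbX s) _ _ _ (summandIncl_point y)).
- by move=> [] /=; rewrite dom_id cod_id.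
- by move=> [] /=; rewrite comp_idrE ?(vp x).1.
- by move=> [] /=; rewrite comp_idrE ?vdom.
Qed.

Lemma admissible_wIndSys R : transfer R -> wIndSys (admissible R).
Proof.
move=> Rtr; have [isoR [compR _]] := Rtr.
split; [split|split].
- by move=> V S S'; apply: admissible_vsiso.
- by move=> U V a S X; apply: admissible_res.
- by move=> V _ i; apply/isoR/isoT_idc.
- by move=> V S Tf RS RT [i j]; apply: compR (RT i j) (RS i); rewrite vcod vdom.
Qed.

Lemma Fbar_admissible R : transfer R -> subC (Fbar R) (admissible R).
Proof.
move=> Rtr; have Rw := admissible_wIndSys Rtr.
apply: Fbar_min => //.
  by apply: F0_subC Rw.1 _ _ => V; [move=> i; apply/Rtr.1/isoT_idc | case].
by move=> V X [u [v [Ru uX]]]; apply: (admissible_res Rtr _ uX) => i.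
Qed.

Lemma Fbar_reflect R R' : transfer R' -> subC (Fbar R) (Fbar R') -> subT R R'.
Proof. by move=> R'tr FRR' a /orbit_Fbar /FRR' /(Fbar_admissible R'tr) /(_ tt). Qed.

Definition vorbit V (S : vset V) (i : fidx (vS S)) : vset V :=
  @VSet T V (rep (dom (varr S i))) (fun _ => varr S i) (fun _ => erefl) (fun _ => vcod S i).

Definition vremove V (S : vset V) (i : fidx (vS S)) : vset V :=
  @VSet T V (@FObj T {j | j != i} (fun j => fo (val j))) (fun j => varr S (val j))
    (fun j => vdom S (val j)) (fun j => vcod S (val j)).

Arguments vorbit {V} S i.
Arguments vremove {V} S i.

Lemma frakR_transport C a V (e : cod a = V) :
  frakR C a <-> C V (@VSet T V (rep (dom a)) (fun _ => a) (fun _ => erefl) (fun _ => e)).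
Proof. by case: V / e. Qed.

Lemma vorbit_frakR C V (S : vset V) i : frakR C (varr S i) <-> C V (vorbit S i).
Proof. exact: frakR_transport. Qed.

Lemma vsiso_split V (S : vset V) i : vsiso (vcoprod (vremove S i) (vorbit S i)) S.
Proof.
pose m (k : fidx (vS (vcoprod (vremove S i) (vorbit S i)))) : fidx (vS S) :=
  match k with inl j => val j | inr _ => i end.
pose m' (j : fidx (vS S)) : fidx (vS (vcoprod (vremove S i) (vorbit S i))) :=
  if insub j is Some j' then inl j' else inr tt.
apply: (@vsiso_reindex V (vcoprod (vremove S i) (vorbit S i)) S m m')
  => [[j|[]]|j|[j|[]]|[j|[]]] //=; rewrite /m' ?vdom //.
- by rewrite valK.
- by rewrite insubF ?eqxx.
- by case: insubP => [j' _ <-|] //=; rewrite negbK => /eqP ->.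
Qed.

Lemma vsiso_vempty V (S : vset V) : (fidx (vS S) -> False) -> vsiso (vempty V) S.
Proof.
move=> noS; pose m' (i : fidx (vS S)) : fidx (vS (vempty V)) := False_rect _ (noS i).
by apply: (@vsiso_reindex V (vempty V) S (fun v => match v with end) m')
  => // i; case: (noS i).
Qed.

Lemma mem_of_orbits C :
  (forall V (S S' : vset V), vsiso S S' -> C V S -> C V S') ->
  (forall V, C V (vempty V)) ->
  (forall V (S S' : vset V), C V S -> C V S' -> C V (vcoprod S S')) ->
  forall V (S : vset V), (forall i, C V (vorbit S i)) -> C V S.
Proof.
move=> isoC emptyC coprodC V S.
have [n] := ubnP #|fidx (vS S)|; elim: n => // n IH in V S *; move=> ltSn orbC.
have [/card0_eq S0 | S_gt0] := posnP #|fidx (vS S)|.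
  by apply: isoC _ (emptyC V); apply: vsiso_vempty => i; have := S0 i; rewrite inE.
have [i _] := card_gt0P S_gt0.
apply: isoC (vsiso_split i) _; apply: coprodC (orbC i).
apply: IH => [|j]; last exact: orbC.
by rewrite card_sig cardC1 -ltnS prednK.
Qed.

Lemma uniWIndSys_vorbit D V (S : vset V) i : uniWIndSys D -> D V S -> D V (vorbit S i).
Proof.
move=> [[[isoD _] _] [_ summD]] DS.
by case/summD: (isoD _ _ _ (vsiso_sym (vsiso_split i)) DS).
Qed.

Lemma IndSys_rightP R C : IndSys C -> (forall a, frakR C a <-> R a) ->
  forall D, uniWIndSys D -> subT (frakR D) R <-> subC D C.
Proof.
move=> [[[[isoC _] _] _] [emptyC coprodC]] CR D uniD.
split=> [DR V S DS | DC a /DC]; last by move/CR.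
apply: (mem_of_orbits isoC emptyC coprodC) => i.
by apply/vorbit_frakR/CR/DR/vorbit_frakR; apply: uniWIndSys_vorbit.
Qed.

End Adjunctions.

Theorem mainTheorem15 (T : smallCat) (HT : orbital T) :
  (* right adjoint: R |-> (frakR|_IndSys)^{-1}(R), included into wIndSys^uni *)
  (forall (R : Ar T -> Prop) (C : coll T),
     transfer R -> IndSys C -> (forall a, frakR C a <-> R a) ->
     uniWIndSys C /\
     forall D : coll T, uniWIndSys D -> (subT (frakR D) R <-> subC D C))
  /\
  (* ... which is fully faithful (order-reflecting) *)
  (forall (R R' : Ar T -> Prop) (C C' : coll T),
     transfer R -> transfer R' -> IndSys C -> IndSys C' ->
     (forall a, frakR C a <-> R a) -> (forall a, frakR C' a <-> R' a) ->
     subC C C' -> subT R R')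
  /\
  (* left adjoint: R |-> Fbar_R *)
  (forall R : Ar T -> Prop, transfer R ->
     uniWIndSys (Fbar R) /\
     forall D : coll T, uniWIndSys D -> (subC (Fbar R) D <-> subT R (frakR D)))
  /\
  (* ... which is fully faithful (order-reflecting) *)
  (forall R R' : Ar T -> Prop, transfer R -> transfer R' ->
     subC (Fbar R) (Fbar R') -> subT R R').
Proof.
split; [|split; [|split]].
- by move=> R C _ IC CR; split; [exact: IC.1 | exact: IndSys_rightP].
- by move=> R R' C C' _ _ _ _ CR C'R' CC' a /CR /CC' /C'R'.
- by move=> R _; split; [exact: Fbar_uniWIndSys | exact: Fbar_leftP].
- by move=> R R' _ R'tr; apply: Fbar_reflect.
Qed.
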